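(* In the setting below, the kernel of $\Phi$ contains the ideal $J_K$ of $\mathbb{Q}[X_{F,e},Y_k:F\in\mathcal{F}_K,k\in K]$ generated by the linear forms $\sum_{F\in\mathcal{F}_K}\langle u,\ell_F\rangle X_{F,e}+\sum_{k\in K}\langle u,\ell_{H_k}\rangle Y_k$ for all $u\in M$.
   Context: Setting: $R$ is a reduced crystallographic root system spanning an $n$-dimensional Euclidean space $V$, with simple system $S=\{\alpha_1,\dots,\alpha_n\}$ identified with $\{1,\dots,n\}$ and Weyl group $W$; $M$ is a lattice with $\mathbb{Z}R\subseteq M\subseteq\{x:2\langle x,\alpha\rangle/\langle\alpha,\alpha\rangle\in\mathbb{Z}\ \forall\alpha\in R\}$; $\Lambda\subset C_S\cap\mathbb{Q}M$ finite with $P=\operatorname{conv}(W(\Lambda))$ full-dimensional, simple (each vertex in exactly $n$ facets) and non-degenerate (no vertex on the boundary of $C_S$); $K\subseteq S$, $W_K$ generated by the reflections $r_k$ in $\alpha_k$, $k\in K$, $H_k$ the fixed hyperplane of $r_k$, $C_K=\{x:\langle x,\alpha_k\rangle\ge0\ \forall k\in K\}$. $\mathcal{F}_K$ is the set of facets of $P$ with barycenter in $C_K$, $W_F$ the stabilizer of $F$ in $W_K$, $\mathcal{F}=\{(F,s):F\in\mathcal{F}_K,s\in W_K/W_F\}$. For a facet $G$ of $P$, $\ell_G$ is its outward normal primitive in $M^\vee=\{y:\langle y,u\rangle\in\mathbb{Z}\ \forall u\in M\}$, and $\ell_{H_k}$ is the primitive outward normal of the facet $H_k\cap P$ of $P\cap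 C_K$. $H^*(X_P;\mathbb{Q})=\mathbb{Q}[X_{F,s}:(F,s)\in\mathcal{F}]/(I_P+J_P)$ for the toric variety $X_P$ of $P$ with respect to $M$, $I_P$ generated by $X_{F_1,s_1}\cdots X_{F_p,s_p}$ with $s_1(F_1)\cap\cdots\cap s_p(F_p)=\emptyset$, $J_P$ generated by $\sum_{(F,s)\in\mathcal{F}}\langle u,\ell_{s(F)}\rangle X_{F,s}$, $u\in M$. For $F\in\mathcal{F}_K$, $s\in W_K$ write $s(\ell_F)-\ell_F=\sum_{k\in K}C_{F,s,k}\ell_{H_k}$ with $C_{F,s,k}\in\mathbb{Q}$ (uniquely determined, depending only on $sW_F$). $\Phi:\mathbb{Q}[X_{F,e},Y_k]\to H^*(X_P;\mathbb{Q})$ is the ring homomorphism with $\Phi(X_{F,e})=\sum_{s\in W_K/W_F}X_{F,s}$, $\Phi(Y_k)=\sum_{(F,s)\in\mathcal{F}}C_{F,s,k}X_{F,s}$. *)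

From HB Require Import structures.
From mathcomp Require Import all_boot all_order all_algebra.
From mathcomp Require Import reals.
From mathcomp Require Import mpoly.

Set Implicit Arguments.
Unset Strict Implicit.
Unset Printing Implicit Defensive.

Import Order.TTheory GRing.Theory Num.Theory.
Local Open Scope ring_scope.

Definition dot {R : realType} {n : nat} (x y : 'rV[R]_n) : R :=
  \sum_(i < n) x 0 i * y 0 i.

Definition cartan {R : realType} {n : nat} (x a : 'rV[R]_n) : R :=
  2 * dot x a / dot a a.

Definition refl {R : realType} {n : nat} (a x : 'rV[R]_n) : 'rV[R]_n :=
  x - cartan x a *: a.

Definition is_root_system {R : realType} {n : nat} (rs : seq 'rV[R]_n) : Prop :=
  [/\ (0 : 'rV[R]_n) \notin rs,
      (<<rs>> = fullv)%VS,
      {in rs &, forall a b, refl a b \in rs},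
      {in rs &, forall a b, cartan b a \is a Num.int} &
      {in rs, forall a (c : R), c *: a \in rs -> c = 1 \/ c = -1}].

Definition is_simple_system {R : realType} {n : nat} (rs : seq 'rV[R]_n)
    (alpha : 'I_n -> 'rV[R]_n) : Prop :=
  [/\ forall i, alpha i \in rs,
      free [seq alpha i | i <- enum 'I_n] &
      forall b, b \in rs -> exists c : 'I_n -> int,
        b = \sum_(i < n) (c i)%:~R *: alpha i /\
        ((forall i, 0 <= c i) \/ (forall i, c i <= 0))].

(* Elements of the Weyl group W as words of reflections in roots *)
Definition wact {R : realType} {n : nat} (w : seq 'rV[R]_n) (x : 'rV[R]_n) :=
  foldr refl x w.

(* Elements of W_K as words in the simple reflections r_k, k in K *)
Definition wactK {R : realType} {n : nat} (alpha : 'I_n -> 'rV[R]_n)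
    (s : seq 'I_n) (x : 'rV[R]_n) :=
  foldr (fun k y => refl (alpha k) y) x s.

Definition is_lattice_M {R : realType} {n : nat} (rs : seq 'rV[R]_n)
    (M : 'rV[R]_n -> Prop) : Prop :=
  [/\ M 0,
      forall x y, M x -> M y -> M (x - y),
      forall a, a \in rs -> M a &
      forall x, M x -> forall a, a \in rs -> cartan x a \is a Num.int].

Definition Mdual {R : realType} {n : nat} (M : 'rV[R]_n -> Prop) (y : 'rV[R]_n) :=
  forall u, M u -> dot y u \is a Num.int.

Definition primitive {R : realType} {n : nat} (M : 'rV[R]_n -> Prop) (l : 'rV[R]_n) :=
  [/\ l != 0, Mdual M l &
      forall y (k : nat), Mdual M y -> l = k%:R *: y -> k = 1%N].

Definition QM {R : realType} {n : nat} (M : 'rV[R]_n -> Prop) (x : 'rV[R]_n) :=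
  exists m (N : nat), [/\ M m, (0 < N)%N & x = N%:R^-1 *: m].

Definition in_CS {R : realType} {n : nat} (alpha : 'I_n -> 'rV[R]_n) x :=
  forall i, 0 <= dot x (alpha i).

Definition in_CK {R : realType} {n : nat} (alpha : 'I_n -> 'rV[R]_n)
    (K : {set 'I_n}) x :=
  forall k, k \in K -> 0 <= dot x (alpha k).

Definition Worbit {R : realType} {n : nat} (rs : seq 'rV[R]_n)
    (Lam : seq 'rV[R]_n) (x : 'rV[R]_n) :=
  exists w, all (mem rs) w /\ exists2 l, l \in Lam & x = wact w l.

Definition conv {R : realType} {n : nat} (S : 'rV[R]_n -> Prop) (x : 'rV[R]_n) :=
  exists (m : nat) (p : 'I_m -> 'rV[R]_n) (t : 'I_m -> R),
    [/\ forall i, S (p i), forall i, 0 <= t i, \sum_i t i = 1 &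
        x = \sum_i t i *: p i].

Definition polytope {R : realType} {n : nat} (rs Lam : seq 'rV[R]_n) :=
  conv (Worbit rs Lam).

Definition face {R : realType} {n : nat} (P : 'rV[R]_n -> Prop) (l x : 'rV[R]_n) :=
  P x /\ forall y, P y -> dot l y <= dot l x.

Definition affine_dim {R : realType} {n : nat} (S : 'rV[R]_n -> Prop) (d : nat) :=
  (exists x0 (pts : seq 'rV[R]_n), [/\ S x0, forall p, p \in pts -> S p &
       \dim <<[seq (p - x0)%R | p : 'rV[R]_n <- pts]>>%VS = d]) /\
  (forall x0 (pts : seq 'rV[R]_n), S x0 -> (forall p, p \in pts -> S p) ->
       (\dim <<[seq (p - x0)%R | p : 'rV[R]_n <- pts]>>%VS <= d)%N).

(* Facets of P are encoded by their primitive outward normals l_G in M^vee: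
   facet_normal M P l  <->  l = l_G for the facet G = face P l. *)
Definition facet_normal {R : realType} {n : nat} (M : 'rV[R]_n -> Prop)
    (P : 'rV[R]_n -> Prop) (l : 'rV[R]_n) :=
  primitive M l /\ affine_dim (face P l) n.-1.

Definition vertex {R : realType} {n : nat} (P : 'rV[R]_n -> Prop) (v : 'rV[R]_n) :=
  exists l, forall x, face P l x <-> x = v.

Definition barycenter {R : realType} {n : nat} (P S : 'rV[R]_n -> Prop)
    (b : 'rV[R]_n) :=
  exists vs : seq 'rV[R]_n,
    [/\ uniq vs, forall v, v \in vs <-> (vertex P v /\ S v) &
        b = (size vs)%:R^-1 *: \sum_(v <- vs) v].

Definition simple_polytope {R : realType} {n : nat} (M : 'rV[R]_n -> Prop)
    (P : 'rV[R]_n -> Prop) :=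
  forall v, vertex P v -> exists ls : seq 'rV[R]_n,
    [/\ uniq ls, size ls = n &
        forall l, l \in ls <-> (facet_normal M P l /\ face P l v)].

Definition non_degenerate {R : realType} {n : nat} (alpha : 'I_n -> 'rV[R]_n)
    (P : 'rV[R]_n -> Prop) :=
  forall v, vertex P v -> in_CS alpha v -> forall i, 0 < dot v (alpha i).

Definition in_FK {R : realType} {n : nat} (alpha : 'I_n -> 'rV[R]_n)
    (K : {set 'I_n}) (M P : 'rV[R]_n -> Prop) (l : 'rV[R]_n) :=
  facet_normal M P l /\ exists2 b, barycenter P (face P l) b & in_CK alpha K b.

Definition facet_image {R : realType} {n : nat} (alpha : 'I_n -> 'rV[R]_n)
    (P : 'rV[R]_n -> Prop) (s : seq 'I_n) (F G : 'rV[R]_n) :=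
  forall x, face P G x <-> exists2 y, face P F y & x = wactK alpha s y.

(* G is (the normal of) a facet in the W_K-orbit of the facet F; the coset
   s W_F in W_K / W_F is identified with the facet s(F). *)
Definition in_WK_orbit {R : realType} {n : nat} (alpha : 'I_n -> 'rV[R]_n)
    (K : {set 'I_n}) (M P : 'rV[R]_n -> Prop) (F G : 'rV[R]_n) :=
  facet_normal M P G /\
  exists s : seq 'I_n, all (mem K) s /\ facet_image alpha P s F G.

Definition is_lH {R : realType} {n : nat} (alpha : 'I_n -> 'rV[R]_n)
    (K : {set 'I_n}) (M P : 'rV[R]_n -> Prop) (k : 'I_n) (l : 'rV[R]_n) :=
  primitive M l /\
  forall x, face (fun y => P y /\ in_CK alpha K y) l x <->
            [/\ P x, in_CK alpha K x & dot x (alpha k) = 0].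

(* a real number which is an integer, viewed as a rational *)
Definition toQ {R : realType} (x : R) : rat := (Num.floor x)%:~R.

Definition ideal_gen {N : nat} (S : {mpoly rat[N]} -> Prop) (p : {mpoly rat[N]}) :=
  exists (gs cs : seq {mpoly rat[N]}),
    [/\ size gs = size cs, forall i : 'I_(size gs), S gs`_i &
        p = \sum_(i < size gs) cs`_i * gs`_i].

Definition setU_pred {T : Type} (A B : T -> Prop) : T -> Prop :=
  fun x => A x \/ B x.

(* Polynomial ring Q[X_{F,s} : (F,s) in \mathcal F]: the variables are
   indexed by 'I_(size Fam), where Fam enumerates \mathcal F as pairs
   (l_F, l_{s(F)}). *)
Definition famF {R : realType} {n : nat} (Fam : seq ('rV[R]_n * 'rV[R]_n))
    (j : nat) := (nth (0, 0) Fam j).1.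
Definition famG {R : realType} {n : nat} (Fam : seq ('rV[R]_n * 'rV[R]_n))
    (j : nat) := (nth (0, 0) Fam j).2.

Definition IP_gen {R : realType} {n : nat} (P : 'rV[R]_n -> Prop)
    (Fam : seq ('rV[R]_n * 'rV[R]_n)) (g : {mpoly rat[size Fam]}) :=
  exists js : seq 'I_(size Fam),
    ~ (exists x, forall j, j \in js -> face P (famG Fam j) x) /\
    g = \prod_(j <- js) 'X_j.

Definition JP_gen {R : realType} {n : nat} (M : 'rV[R]_n -> Prop)
    (Fam : seq ('rV[R]_n * 'rV[R]_n)) (g : {mpoly rat[size Fam]}) :=
  exists u, M u /\
    g = \sum_(j < size Fam) toQ (dot u (famG Fam j)) *: 'X_j.

(* Source ring Q[X_{F,e}, Y_k : F in F_K, k in K]: variables indexed by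
   'I_(size FK + #|K|); X_{F,e} is 'X_(lshift _ a) for F = FK`_a and Y_k is
   'X_(rshift _ i) for k = enum_val i. *)
Definition JK_gen {R : realType} {n : nat} (K : {set 'I_n})
    (M : 'rV[R]_n -> Prop) (lH : 'I_n -> 'rV[R]_n) (FK : seq 'rV[R]_n)
    (g : {mpoly rat[size FK + #|K|]}) :=
  exists u, M u /\
    g = \sum_(a < size FK) toQ (dot u FK`_a) *: 'X_(lshift #|K| a)
      + \sum_(i < #|K|) toQ (dot u (lH (enum_val i))) *: 'X_(rshift (size FK) i).

Definition Phi_var {R : realType} {n : nat} (K : {set 'I_n})
    (FK : seq 'rV[R]_n) (Fam : seq ('rV[R]_n * 'rV[R]_n))
    (C : 'rV[R]_n -> 'rV[R]_n -> 'I_n -> rat)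
    (i : 'I_(size FK + #|K|)) : {mpoly rat[size Fam]} :=
  match split i with
  | inl a => \sum_(j < size Fam | famF Fam j == FK`_a) 'X_j
  | inr k => \sum_(j < size Fam) C (famF Fam j) (famG Fam j) (enum_val k) *: 'X_j
  end.

Definition Phi {R : realType} {n : nat} (K : {set 'I_n})
    (FK : seq 'rV[R]_n) (Fam : seq ('rV[R]_n * 'rV[R]_n))
    (C : 'rV[R]_n -> 'rV[R]_n -> 'I_n -> rat)
    (p : {mpoly rat[size FK + #|K|]}) : {mpoly rat[size Fam]} :=
  p \mPo [tuple @Phi_var R n K FK Fam C i | i < size FK + #|K|].

From HB Require Import structures.
From mathcomp Require Import all_boot all_order all_algebra.
From mathcomp Require Import reals.
From mathcomp Require Import mpoly.
From mathcomp Require Import ring zify.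
Import Order.TTheory GRing.Theory Num.Theory.
Local Open Scope ring_scope.
Set Implicit Arguments.
Unset Strict Implicit.

(* Phi sends the generator of J_K attached to u in M to the generator of J_P
   attached to u, because <u, l_{s(F)}> = <u, l_F> + sum_k C_{F,s,k} <u, l_{H_k}>
   for every (F, s); being a ring morphism, Phi then maps J_K into J_P.
   The identity reduces to l_{s(F)} = s(l_F).  The group W_K acts by isometries
   preserving P, M and M^vee, so s(l_F) is a primitive outward normal of the facet
   s(F).  Two outward normals of a facet of a full-dimensional polytope are
   orthogonal to a hyperplane, hence positively proportional; the ratio is
   rational because the roots span V, lie in M and pair integrally with both
   normals, and primitivity of both normals forces it to be 1. *)

Section Dot.
Variables (R : realType) (n : nat).
Implicit Types (x y z : 'rV[R]_n).

Lemma dotC x y : dot x y = dot y x.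
Proof. by apply: eq_bigr => i _; rewrite mulrC. Qed.

Lemma dotDl x y z : dot (x + y) z = dot x z + dot y z.
Proof. by rewrite /dot -big_split; apply: eq_bigr => i _; rewrite mxE mulrDl. Qed.

Lemma dotZl (t : R) x z : dot (t *: x) z = t * dot x z.
Proof. by rewrite /dot mulr_sumr; apply: eq_bigr => i _; rewrite mxE mulrA. Qed.

Lemma dotBl x y z : dot (x - y) z = dot x z - dot y z.
Proof. by rewrite -scaleN1r dotDl dotZl mulN1r. Qed.

Lemma dot0l z : dot 0 z = 0.
Proof. by rewrite -(scale0r 0) dotZl mul0r. Qed.

Lemma dotDr x y z : dot z (x + y) = dot z x + dot z y.
Proof. by rewrite dotC dotDl !(dotC z). Qed.

Lemma dotZr (t : R) x z : dot z (t *: x) = t * dot z x.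
Proof. by rewrite dotC dotZl dotC. Qed.

Lemma dotBr x y z : dot z (x - y) = dot z x - dot z y.
Proof. by rewrite !(dotC z) dotBl. Qed.

Lemma dot0r z : dot z 0 = 0.
Proof. by rewrite dotC dot0l. Qed.

Lemma dot_sumr (I : Type) (r : seq I) (P : pred I) (f : I -> 'rV[R]_n) z :
  dot z (\sum_(i <- r | P i) f i) = \sum_(i <- r | P i) dot z (f i).
Proof. exact: (big_morph (dot z) (fun x y => dotDr x y z) (dot0r z)). Qed.

Lemma dot_eq0 x : (dot x x == 0) = (x == 0).
Proof.
apply/idP/eqP => [|->]; last by rewrite dot0l.
rewrite psumr_eq0 => [/allP x0|i _]; last by rewrite -expr2 sqr_ge0.
apply/rowP => i; have /= := x0 i (mem_index_enum i).
by rewrite mulf_eq0 orbb mxE => /eqP.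
Qed.

End Dot.

Section Reflection.
Variables (R : realType) (n : nat).
Implicit Types (a x y : 'rV[R]_n).

Lemma refl_is_linear a : linear (refl a).
Proof.
move=> t x y; rewrite /refl /cartan dotDl dotZl; apply/rowP => i; rewrite !mxE.
by ring.
Qed.

HB.instance Definition _ a :=
  GRing.isLinear.Build R 'rV[R]_n 'rV[R]_n *:%R (refl a) (refl_is_linear a).

Lemma refl_dotl a x : dot a a != 0 -> dot (refl a x) a = - dot x a.
Proof. by move=> a0; rewrite /refl /cartan dotBl dotZl; field. Qed.

Lemma refl_dot a x y : dot a a != 0 -> dot (refl a x) (refl a y) = dot x y.
Proof.
by move=> a0; rewrite /refl /cartan !dotBl !dotBr !dotZl !dotZr (dotC y a); field.
Qed.

Lemma reflK a : dot a a != 0 -> involutive (refl a).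
Proof.
move=> a0 x; rewrite {1}/refl /cartan refl_dotl // /refl /cartan.
by apply/rowP => i; rewrite !mxE; field.
Qed.

End Reflection.

Section SimpleReflectionWords.
Variables (R : realType) (n : nat) (alpha : 'I_n -> 'rV[R]_n).
Hypothesis alpha_neq0 : forall k, dot (alpha k) (alpha k) != 0.
Implicit Types (x y : 'rV[R]_n) (s : seq 'I_n).

Lemma wactK_is_linear s : linear (wactK alpha s).
Proof. by elim: s => //= k s IH t x y; have /= -> := IH t x y; rewrite linearP. Qed.

HB.instance Definition _ s :=
  GRing.isLinear.Build R 'rV[R]_n 'rV[R]_n *:%R (wactK alpha s) (wactK_is_linear s).

Lemma wactK_dot s x y : dot (wactK alpha s x) (wactK alpha s y) = dot x y.
Proof. by elim: s => //= k s IH; rewrite refl_dot. Qed.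

Lemma wactK_revK s : cancel (wactK alpha s) (wactK alpha (rev s)).
Proof.
elim: s => //= k s IH x.
by rewrite rev_cons -cats1 /wactK foldr_cat /= reflK //; apply: IH.
Qed.

Lemma wactKK_rev s : cancel (wactK alpha (rev s)) (wactK alpha s).
Proof. by have := wactK_revK (rev s); rewrite revK. Qed.

Lemma wactK_adj s x y : dot (wactK alpha s x) y = dot x (wactK alpha (rev s) y).
Proof. by rewrite -{1}(wactKK_rev s y) wactK_dot. Qed.

End SimpleReflectionWords.

Section WeylInvariance.
Variables (R : realType) (n : nat) (rs : seq 'rV[R]_n) (alpha : 'I_n -> 'rV[R]_n).
Variables (M : 'rV[R]_n -> Prop) (Lam : seq 'rV[R]_n).
Hypothesis alpha_rs : forall i, alpha i \in rs.
Hypothesis alpha_neq0 : forall k, dot (alpha k) (alpha k) != 0.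
Hypothesis latM : is_lattice_M rs M.
Implicit Types (x y l : 'rV[R]_n) (s : seq 'I_n).

Lemma Worbit_wactK s x : Worbit rs Lam x -> Worbit rs Lam (wactK alpha s x).
Proof.
case=> w [rs_w [l Lam_l ->]]; exists (map alpha s ++ w); split.
  by rewrite all_cat rs_w andbT; apply/allP => _ /mapP [i _ ->]; apply: alpha_rs.
by exists l => //; rewrite /wact foldr_cat foldr_map.
Qed.

Lemma polytope_wactK s x : polytope rs Lam x -> polytope rs Lam (wactK alpha s x).
Proof.
case=> m [p [t [Wp t_ge0 t_sum1 ->]]]; exists m, (wactK alpha s \o p), t.
split=> // [i|]; first exact: Worbit_wactK.
by rewrite linear_sum; apply: eq_bigr => i _; rewrite linearZ.
Qed.

Lemma lattice_opp x : M x -> M (- x).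
Proof. by case: latM => M0 MB _ _ Mx; rewrite -sub0r; apply: MB. Qed.

Lemma lattice_add x y : M x -> M y -> M (x + y).
Proof.
by case: latM => _ MB _ _ Mx My; rewrite -[y]opprK; apply/MB/lattice_opp.
Qed.

Lemma lattice_intmul x (z : int) : M x -> M (x *~ z).
Proof.
move=> Mx; have Mnat k : M (x *+ k).
  by elim: k => [|k IH]; [rewrite mulr0n; case: latM | rewrite mulrS; apply: lattice_add].
by case: z => k; [exact: Mnat | rewrite NegzE mulrNz; exact/lattice_opp/Mnat].
Qed.

Lemma lattice_wactK s x : M x -> M (wactK alpha s x).
Proof.
case: latM => _ MB Mrs Mint; elim: s => //= k s IH Mx.
rewrite /refl -(floorK (Mint _ (IH Mx) _ (alpha_rs k))) scaler_int.
by apply: MB; [exact: IH | apply/lattice_intmul/Mrs/alpha_rs].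
Qed.

Lemma Mdual_wactK s l : Mdual M l -> Mdual M (wactK alpha s l).
Proof. by move=> Ml u Mu; rewrite wactK_adj //; apply/Ml/lattice_wactK. Qed.

Lemma primitive_wactK s l : primitive M l -> primitive M (wactK alpha s l).
Proof.
case=> l_neq0 Ml l_prim; split; last 1 first.
- move=> y k My Ey; apply: (l_prim (wactK alpha (rev s) y)); first exact: Mdual_wactK.
  by rewrite -[l](wactK_revK alpha_neq0 s) Ey linearZ.
- by move: l_neq0; apply: contra_neq => Ew; rewrite -(wactK_revK alpha_neq0 s l) Ew linear0.
- exact: Mdual_wactK.
Qed.

Lemma face_wactK s l x :
  face (polytope rs Lam) (wactK alpha s l) x <->
  exists2 y, face (polytope rs Lam) l y & x = wactK alpha s y.
Proof.
split=> [[Px x_max] | [y [Py y_max] ->]].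
  exists (wactK alpha (rev s) x); last by rewrite wactKK_rev.
  split=> [|z Pz]; first exact: polytope_wactK.
  by rewrite -!(wactK_dot alpha_neq0 s l) wactKK_rev //; apply/x_max/polytope_wactK.
split=> [|z Pz]; first exact: polytope_wactK.
by rewrite wactK_dot // wactK_adj //; apply/y_max/polytope_wactK.
Qed.

End WeylInvariance.

Section Orthogonality.
Variables (R : realType) (n : nat).
Implicit Types (l v : 'rV[R]_n) (X : seq 'rV[R]_n).

Lemma dot_span_eq0 l X v :
  {in X, forall w, dot l w = 0} -> v \in <<X>>%VS -> dot l v = 0.
Proof.
move=> lX /(coord_span (X := in_tuple X)) ->; rewrite dot_sumr big1 // => i _.
by rewrite dotZr lX ?mulr0 ?mem_nth.
Qed.

Lemma orth_span_eq0 l X : {in X, forall w, dot l w = 0} -> l \in <<X>>%VS -> l = 0.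
Proof. by move=> lX /(dot_span_eq0 lX) /eqP; rewrite dot_eq0 => /eqP. Qed.

Lemma orth_full_span_eq0 l X :
  \dim <<X>>%VS = n -> {in X, forall w, dot l w = 0} -> l = 0.
Proof.
move=> dimX lX; apply: orth_span_eq0 lX _.
have -> : <<X>>%VS = fullv by apply/eqP; rewrite eqEdim subvf dimvf dimX /dim /= mul1n.
exact: memvf.
Qed.

Lemma exists_dot_neq0 l X : <<X>>%VS = fullv -> l != 0 -> exists2 a, a \in X & dot l a != 0.
Proof.
move=> spanX l_neq0; apply/hasP; apply: contraNT l_neq0 => /hasPn lX.
apply/eqP/(orth_span_eq0 (X := X)); last by rewrite spanX memvf.
by move=> w /lX; rewrite negbK => /eqP.
Qed.

Lemma orth_hyperplane_colinear l1 l2 X :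
  \dim <<X>>%VS = n.-1 -> l1 != 0 ->
  {in X, forall w, dot l1 w = 0} -> {in X, forall w, dot l2 w = 0} ->
  l2 = (dot l2 l1 / dot l1 l1) *: l1.
Proof.
move=> dimX l1_neq0 l1X l2X.
have l1_notin : l1 \notin <<X>>%VS by apply: contra l1_neq0 => /(orth_span_eq0 l1X) ->.
have dim_l1X : \dim <<l1 :: X>>%VS = n.
  have /dimv_leqif_sup/ltn_leqif : (<<X>> <= <<l1 :: X>>)%VS by rewrite span_cons addvSr.
  rewrite span_cons subv_add subvv andbT -memvE (negbTE l1_notin) dimX -span_cons.
  have := dimvS (subvf <<l1 :: X>>%VS); rewrite dimvf /dim /= mul1n; lia.
apply/eqP; rewrite -subr_eq0; apply/eqP/(orth_full_span_eq0 dim_l1X) => w.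
rewrite in_cons => /predU1P [->|Xw]; first by rewrite dotBl dotZl; field; rewrite dot_eq0.
by rewrite dotBl dotZl (l2X w) // (l1X w) // mulr0 subrr.
Qed.

End Orthogonality.

Lemma toQK (R : realType) (x : R) : x \is a Num.int -> ratr (toQ x) = x.
Proof. by move=> x_int; rewrite /toQ rmorph_int floorK. Qed.

Section PrimitiveVectors.
Variables (R : realType) (n : nat) (M : 'rV[R]_n -> Prop).
Implicit Types (l : 'rV[R]_n).

Lemma primitive_rat_multiple l1 l2 (r : rat) :
  primitive M l1 -> Mdual M l2 -> l2 = ratr r *: l1 -> denq r = 1.
Proof.
case=> _ Ml1 l1_prim Ml2 El2.
have /coprimezP [[u1 u2] /= bezout] : coprimez (numq r) (denq r).
  by rewrite coprimezE coprime_num_den.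
(* By Bezout, [y] is [l1 / denq r], and it lies in [Mdual M]. *)
pose y := u1%:~R *: l2 + u2%:~R *: l1.
have My : Mdual M y.
  by move=> w Mw; rewrite dotDl !dotZl rpredD ?rpredM ?intr_int ?Ml1 ?Ml2.
have El1 : l1 = `|denq r|%:R *: y.
  have q_neq0 : (denq r)%:~R != 0 :> R by rewrite intr_eq0 denq_neq0.
  have bezoutR : u1%:~R * (numq r)%:~R + u2%:~R * (denq r)%:~R = 1 :> R.
    by rewrite -!intrM -intrD bezout.
  rewrite /y El2 -{2}[r]divq_num_den fmorph_div !rmorph_int /= !scalerA -scalerDl scalerA.
  rewrite natr_absz gtr0_norm ?denq_gt0 // -[LHS]scale1r; congr (_ *: _).
  by symmetry; apply: etrans bezoutR; field.
have /(congr1 Posz) := l1_prim y _ My El1.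
by rewrite gtz0_abs ?denq_gt0.
Qed.

Lemma primitive_pos_multiple_eq l1 l2 c a :
  primitive M l1 -> primitive M l2 -> l2 = c *: l1 -> 0 < c ->
  M a -> dot l1 a != 0 -> l2 = l1.
Proof.
move=> l1_prim [_ Ml2 l2_prim] El2 c_gt0 Ma l1a_neq0.
have [_ Ml1 _] := l1_prim.
pose r := toQ (dot l2 a) / toQ (dot l1 a).
have rE : ratr r = c.
  by rewrite /r fmorph_div /= !toQK ?Ml1 ?Ml2 // El2 dotZl mulfK.
have r_int : r = (numq r)%:~R.
  have El2r : l2 = ratr r *: l1 by rewrite rE.
  by rewrite -{1}[r]divq_num_den (primitive_rat_multiple l1_prim Ml2 El2r) divr1.
have numq_gt0 : 0 < numq r by rewrite numq_gt0 -(ltr0q R) rE.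
have El2' : l2 = `|numq r|%:R *: l1.
  by rewrite El2 -rE {1}r_int natr_absz gtr0_norm // rmorph_int.
by rewrite El2' (l2_prim l1 _ Ml1 El2') scale1r.
Qed.

End PrimitiveVectors.

Section Facets.
Variables (R : realType) (n : nat) (M P : 'rV[R]_n -> Prop).
Implicit Types (l x y : 'rV[R]_n).

Lemma face_level l x y : face P l x -> face P l y -> dot l x = dot l y.
Proof. by move=> [Px x_max] [Py y_max]; apply/le_anti; rewrite x_max ?y_max. Qed.

Lemma full_dim_level_eq0 l d : affine_dim P n -> (forall y, P y -> dot l y = d) -> l = 0.
Proof.
case=> [[x0 [pts [Px0 Ppts dim_pts]]] _] l_level.
apply: (orth_full_span_eq0 dim_pts) => _ /mapP [p pts_p ->].
by rewrite dotBr !l_level ?subrr //; apply: Ppts.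
Qed.

Lemma facet_normal_unique (rs : seq 'rV[R]_n) l1 l2 :
  <<rs>>%VS = fullv -> {in rs, forall a, M a} -> affine_dim P n ->
  facet_normal M P l1 -> primitive M l2 ->
  (forall x, face P l1 x <-> face P l2 x) -> l1 = l2.
Proof.
move=> span_rs Mrs Pfull [l1_prim [[x0 [pts [Fx0 Fpts dimX]]] _]] l2_prim same_face.
have orthX l : face P l x0 -> (forall p, p \in pts -> face P l p) ->
    {in [seq p - x0 | p <- pts], forall w, dot l w = 0}.
  by move=> Fx0' Fpts' _ /mapP [p pts_p ->]; rewrite dotBr (face_level (Fpts' p pts_p) Fx0') subrr.
have l1X := orthX l1 Fx0 Fpts.
have l2X := orthX l2 ((same_face x0).1 Fx0) (fun p pts_p => (same_face p).1 (Fpts p pts_p)).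
have [[l1_neq0 _ _] [l2_neq0 _ _]] := (l1_prim, l2_prim).
have El2 := orth_hyperplane_colinear dimX l1_neq0 l1X l2X.
have c_gt0 : 0 < dot l2 l1 / dot l1 l1.
  rewrite lt_def; apply/andP; split.
    by apply: contra l2_neq0 => /eqP c0; rewrite El2 c0 scale0r.
  (* A negative multiple [l2] of [l1] would make [x0] minimise [dot l1] on [P] too. *)
  rewrite leNgt; apply/negP => c_lt0; move/eqP: l1_neq0; apply.
  apply: (@full_dim_level_eq0 l1 (dot l1 x0) Pfull) => y Py.
  apply/le_anti; rewrite Fx0.2 //= -(ler_nM2l c_lt0) -!dotZl -El2.
  by have [_ ->] := (same_face x0).1 Fx0.
have [a rs_a l1a_neq0] := exists_dot_neq0 span_rs l1_neq0.
by rewrite (primitive_pos_multiple_eq l1_prim l2_prim El2 c_gt0 (Mrs a rs_a) l1a_neq0).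
Qed.

End Facets.

Lemma facet_image_wactK (R : realType) (n : nat) (rs : seq 'rV[R]_n)
    (alpha : 'I_n -> 'rV[R]_n) (M : 'rV[R]_n -> Prop) (Lam : seq 'rV[R]_n)
    (s : seq 'I_n) (F G : 'rV[R]_n) :
  (forall i, alpha i \in rs) -> (forall k, dot (alpha k) (alpha k) != 0) ->
  is_lattice_M rs M -> <<rs>>%VS = fullv -> affine_dim (polytope rs Lam) n ->
  facet_normal M (polytope rs Lam) F -> facet_normal M (polytope rs Lam) G ->
  facet_image alpha (polytope rs Lam) s F G -> G = wactK alpha s F.
Proof.
move=> alpha_rs alpha_neq0 latM span_rs Pfull [F_prim _] G_facet sFG.
have [_ _ Mrs _] := latM.
apply: (facet_normal_unique span_rs Mrs Pfull G_facet).
  exact: primitive_wactK.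
by move=> x; rewrite face_wactK // sFG.
Qed.

Lemma toQ_dot_decomp (R : realType) (n : nat) (K : {set 'I_n})
    (c : 'I_n -> rat) (l : 'I_n -> 'rV[R]_n) (u F G : 'rV[R]_n) :
  dot u F \is a Num.int -> dot u G \is a Num.int ->
  {in K, forall k, dot u (l k) \is a Num.int} ->
  G - F = \sum_(k in K) ratr (c k) *: l k ->
  toQ (dot u G) = toQ (dot u F) + \sum_(k in K) c k * toQ (dot u (l k)).
Proof.
move=> uF_int uG_int ul_int EGF; apply: (fmorph_inj (@ratr R)).
rewrite rmorphD rmorph_sum /= !toQK // -[G](subrK F) EGF dotDr addrC dot_sumr.
by congr (_ + _); apply: eq_bigr => k Kk; rewrite rmorphM /= toQK ?ul_int // dotZr.
Qed.

Lemma ideal_gen_rmorph (N N' : nat) (f : {rmorphism {mpoly rat[N]} -> {mpoly rat[N']}})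
    (S : {mpoly rat[N]} -> Prop) (S' : {mpoly rat[N']} -> Prop) p :
  (forall g, S g -> S' (f g)) -> ideal_gen S p -> ideal_gen S' (f p).
Proof.
move=> fS [gs [cs [size_cs Sgs ->]]]; exists (map f gs), (map f cs); split.
- by rewrite !size_map.
- move=> i; have i_lt : (i < size gs)%N by rewrite -(size_map f).
  by rewrite (nth_map 0) //; apply: fS (Sgs (Ordinal i_lt)).
- rewrite rmorph_sum size_map; apply: eq_bigr => i _.
  by rewrite rmorphM !(nth_map 0) // -?size_cs.
Qed.

Lemma big_ord_nth_eq (T : eqType) (V : nmodType) (x0 x : T) (s : seq T) (F : T -> V) :
  uniq s -> x \in s -> \sum_(a < size s | x == nth x0 s a) F (nth x0 s a) = F x.
Proof.
move=> s_uniq s_x; have x_lt : (index x s < size s)%N by rewrite index_mem.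
rewrite (big_pred1 (Ordinal x_lt)) /= ?nth_index // => a /=.
by apply/eqP/eqP => [xE|->]; [apply/val_inj; rewrite /= xE index_uniq | rewrite nth_index].
Qed.

Section PhiImage.
Variables (R : realType) (n : nat) (K : {set 'I_n}) (FK : seq 'rV[R]_n).
Variables (Fam : seq ('rV[R]_n * 'rV[R]_n)) (C : 'rV[R]_n -> 'rV[R]_n -> 'I_n -> rat).

HB.instance Definition _ := GRing.LRMorphism.copy (@Phi R n K FK Fam C)
  (comp_mpoly [tuple @Phi_var R n K FK Fam C i | i < size FK + #|K|]).

Lemma Phi_lshift a :
  @Phi R n K FK Fam C 'X_(lshift #|K| a) = \sum_(j < size Fam | famF Fam j == FK`_a) 'X_j.
Proof. by rewrite /Phi comp_mpolyXU nth_mktuple /Phi_var (unsplitK (inl a)). Qed.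

Lemma Phi_rshift i :
  @Phi R n K FK Fam C 'X_(rshift (size FK) i) =
  \sum_(j < size Fam) C (famF Fam j) (famG Fam j) (enum_val i) *: 'X_j.
Proof. by rewrite /Phi comp_mpolyXU nth_mktuple /Phi_var (unsplitK (inr i)). Qed.

Lemma Phi_linear_form (f : 'rV[R]_n -> rat) (g : 'I_n -> rat) :
  uniq FK -> (forall j : 'I_(size Fam), famF Fam j \in FK) ->
  @Phi R n K FK Fam C (\sum_(a < size FK) f FK`_a *: 'X_(lshift #|K| a)
                      + \sum_(i < #|K|) g (enum_val i) *: 'X_(rshift (size FK) i)) =
  \sum_(j < size Fam)
     (f (famF Fam j) + \sum_(k in K) C (famF Fam j) (famG Fam j) k * g k) *: 'X_j.
Proof.
move=> FK_uniq famF_FK; rewrite raddfD /= !raddf_sum /=.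
under eq_bigr => a _ do rewrite linearZ /= Phi_lshift scaler_sumr big_mkcond.
under [X in _ + X]eq_bigr => i _ do rewrite linearZ /= Phi_rshift scaler_sumr.
under [RHS]eq_bigr => j _ do rewrite scalerDl.
rewrite big_split [X in X + _ = _]exchange_big [X in _ + X = _]exchange_big /=; congr (_ + _); apply: eq_bigr => j _.
  by rewrite -big_mkcond -scaler_suml /= big_ord_nth_eq.
rewrite scaler_suml [RHS]big_enum_val; apply: eq_bigr => i _.
by rewrite scalerA mulrC.
Qed.

End PhiImage.

Lemma famFG_mem (R : realType) (n : nat) (Fam : seq ('rV[R]_n * 'rV[R]_n))
    (j : 'I_(size Fam)) :
  (famF Fam j, famG Fam j) \in Fam.
Proof. by rewrite /famF /famG -surjective_pairing mem_nth. Qed.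

Theorem lemma4p3
  (R : realType) (n : nat)
  (rs : seq 'rV[R]_n) (alpha : 'I_n -> 'rV[R]_n)
  (M : 'rV[R]_n -> Prop) (Lam : seq 'rV[R]_n) (K : {set 'I_n})
  (lH : 'I_n -> 'rV[R]_n)
  (FK : seq 'rV[R]_n) (Fam : seq ('rV[R]_n * 'rV[R]_n))
  (C : 'rV[R]_n -> 'rV[R]_n -> 'I_n -> rat) :
  (* root system, simple system, lattice *)
  is_root_system rs ->
  is_simple_system rs alpha ->
  is_lattice_M rs M ->
  (* Lambda finite, in C_S \cap Q M; P = conv(W(Lambda)) full-dimensional,
     simple and non-degenerate *)
  (forall l, l \in Lam -> in_CS alpha l /\ QM M l) ->
  affine_dim (polytope rs Lam) n ->
  simple_polytope M (polytope rs Lam) ->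
  non_degenerate alpha (polytope rs Lam) ->
  (* l_{H_k}, k in K *)
  (forall k, k \in K -> is_lH alpha K M (polytope rs Lam) k (lH k)) ->
  (* FK enumerates \mathcal F_K (by primitive outward normals) *)
  uniq FK ->
  (forall l, l \in FK <-> in_FK alpha K M (polytope rs Lam) l) ->
  (* Fam enumerates \mathcal F = {(F, s W_F)}, the coset s W_F being
     recorded by the facet s(F) *)
  uniq Fam ->
  (forall F G, (F, G) \in Fam <->
      (F \in FK /\ in_WK_orbit alpha K M (polytope rs Lam) F G)) ->
  (* coefficients C_{F,s,k}: s(l_F) - l_F = sum_k C_{F,s,k} l_{H_k} *)
  (forall F G, (F, G) \in Fam ->
     forall s : seq 'I_n, all (mem K) s ->
       facet_image alpha (polytope rs Lam) s F G ->
       wactK alpha s F - F = \sum_(k in K) ratr (C F G k) *: lH k) ->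
  (* ker Phi contains J_K *)
  forall p : {mpoly rat[size FK + #|K|]},
    ideal_gen (@JK_gen R n K M lH FK) p ->
    ideal_gen (setU_pred (@IP_gen R n (polytope rs Lam) Fam)
                         (@JP_gen R n M Fam))
              (@Phi R n K FK Fam C p).
Proof.
move=> [rs_neq0 span_rs _ _ _] [alpha_rs _ _] latM _ Pfull _ _ lH_prim FK_uniq FK_def _
  Fam_def C_def p.
have alpha_neq0 k : dot (alpha k) (alpha k) != 0.
  by rewrite dot_eq0; apply: contraNneq rs_neq0 => <-.
have Fam_FK (j : 'I_(size Fam)) : famF Fam j \in FK by have [] := (Fam_def _ _).1 (famFG_mem j).
have dot_int u l : M u -> primitive M l -> dot u l \is a Num.int.
  by move=> Mu [_ Ml _]; rewrite dotC Ml.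
have key u (j : 'I_(size Fam)) : M u -> toQ (dot u (famG Fam j)) =
    toQ (dot u (famF Fam j)) + \sum_(k in K) C (famF Fam j) (famG Fam j) k * toQ (dot u (lH k)).
  move=> Mu; have [F_FK [G_facet [s [s_K sFG]]]] := (Fam_def _ _).1 (famFG_mem j).
  have F_facet := ((FK_def _).1 F_FK).1.
  apply: toQ_dot_decomp; [exact: dot_int F_facet.1 | exact: dot_int G_facet.1 |
    by move=> k /lH_prim [] /(dot_int u _ Mu) |].
  rewrite {1}(facet_image_wactK alpha_rs alpha_neq0 latM span_rs Pfull F_facet G_facet sFG).
  exact: C_def (famFG_mem j) s s_K sFG.
apply: ideal_gen_rmorph => _ [u [Mu ->]]; right; exists u; split=> //.
rewrite /= (Phi_linear_form _ _ (fun l => toQ (dot u l)) (fun k => toQ (dot u (lH k)))) //.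
by apply: eq_bigr => j _; rewrite key.
Qed.
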